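(* Let $k\ge1$ and let $Y$ be a random variable in $[0,1]^k$. Then for all $s>0$ and $r\ge0$, $$D^{(q)}(r\,|\,Y,\|\cdot\|_\infty,s)\le e^{-r/k}.$$ Moreover, if $Y_1\le\dots\le Y_k$ almost surely, the same bound holds when the infimum defining $D^{(q)}$ is restricted to codebooks $\mathcal C$ all of whose elements $\hat y$ satisfy $\hat y_1\le\dots\le\hat y_k$.
   Context: $D^{(q)}(r\,|\,Y,\|\cdot\|_\infty,s)=\inf\{(\mathbb E\min_{a\in\mathcal C}\|Y-a\|_\infty^s)^{1/s}:\mathcal C\subset\mathbb R^k\text{ finite},\ \log\#\mathcal C\le r\}$ (natural log). *)

From HB Require Import structures.
From mathcomp Require Import all_boot all_order all_algebra.
From mathcomp Require Import all_classical all_reals all_analysis.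
Set Implicit Arguments. Unset Strict Implicit. Unset Printing Implicit Defensive.
Import Order.TTheory GRing.Theory Num.Theory.
Local Open Scope ring_scope.
Local Open Scope classical_set_scope.

Definition supnorm {R : realType} {k : nat} (v : 'rV[R]_k) : R :=
  \big[Num.max/0]_(i < k) `|v ord0 i|.

Definition rvec {d} {T : measurableType d} {R : realType}
  {P : probability T R} {k : nat} (Y : 'I_k -> {RV P >-> R}) (x : T) : 'rV[R]_k :=
  \row_(i < k) Y i x.

Definition qerr {R : realType} {k : nat} (C : seq 'rV[R]_k) (y : 'rV[R]_k) : R :=
  match C with
  | [::] => 0
  | a0 :: C' => \big[Num.min/supnorm (y - a0)]_(a <- C') supnorm (y - a)
  end.

Definition rate_ok {R : realType} {k : nat} (r : R) (C : seq 'rV[R]_k) : Prop :=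
  C <> [::] /\ ln ((size (undup C))%:R) <= r.

Definition distortion {d} {T : measurableType d} {R : realType}
  {P : probability T R} {k : nat} (Y : 'I_k -> {RV P >-> R}) (s : R)
  (C : seq 'rV[R]_k) : \bar R :=
  ((\int[P]_x ((qerr C (rvec Y x)) `^ s)%:E) `^ s^-1)%E.

Definition Dq_restr {d} {T : measurableType d} {R : realType}
  {P : probability T R} {k : nat} (Y : 'I_k -> {RV P >-> R}) (s r : R)
  (adm : seq 'rV[R]_k -> Prop) : \bar R :=
  ereal_inf [set distortion Y s C | C in [set C | rate_ok r C /\ adm C]].

Definition Dq {d} {T : measurableType d} {R : realType}
  {P : probability T R} {k : nat} (Y : 'I_k -> {RV P >-> R}) (s r : R) : \bar R :=
  Dq_restr Y s r (fun _ => True).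

Definition monotone_codebook {R : realType} {k : nat} (C : seq 'rV[R]_k) : Prop :=
  forall a, a \in C -> forall i j : 'I_k, (i <= j)%N -> a ord0 i <= a ord0 j.

From HB Require Import structures.
From mathcomp Require Import all_boot all_order all_algebra.
From mathcomp Require Import all_classical all_reals all_analysis.
From mathcomp Require Import ring lra measurable_realfun.
Set Implicit Arguments. Unset Strict Implicit. Unset Printing Implicit Defensive.
Import Order.TTheory GRing.Theory Num.Theory.
Local Open Scope ring_scope.
Local Open Scope classical_set_scope.

(* Quantize every coordinate to the midpoints of N = floor(e^(r/k)) equal
   subintervals of [0, 1].  The product grid has at most N^k <= e^r points and
   every point of [0, 1]^k lies within 1/(2N) <= e^(-r/k) of it in the sup norm,
   so the grid codebook has distortion at most e^(-r/k) for every s.  The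
   coordinate quantizer is nondecreasing, so when Y_1 <= ... <= Y_k almost
   surely, Y almost surely falls in a cell with nondecreasing indices, and the
   (nondecreasing) grid points of those cells alone achieve the same bound. *)

Section Quantization_error.
Variables (R : realType) (k : nat).
Implicit Types (v y b : 'rV[R]_k) (C : seq 'rV[R]_k).

Lemma supnorm_ge0 v : 0 <= supnorm v.
Proof. by apply: (big_ind (fun x => 0 <= x)) => // a b; rewrite le_max => ->. Qed.

Lemma supnorm_le v e : 0 <= e -> (forall i, `|v ord0 i| <= e) -> supnorm v <= e.
Proof. by move=> e_ge0 v_le; apply: bigmax_le. Qed.

Lemma qerr_ge0 C y : 0 <= qerr C y.
Proof. by case: C => //= a C; apply: le_bigmin => *; apply: supnorm_ge0. Qed.

Lemma qerr_le C y b : b \in C -> qerr C y <= supnorm (y - b).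
Proof.
case: C => //= a C; rewrite inE => /orP[/eqP-> | bC]; first exact: bigmin_le_id.
exact: ge_bigmin_seq.
Qed.

End Quantization_error.

Section Grid.
Variables (R : realType) (n : nat).

Definition grid_point (j : 'I_n.+1) : R := (2 * j%:R + 1) / (2 * n.+1%:R).

(* Clamped at n so that t = 1 lies in the last cell. *)
Definition grid_index (t : R) : 'I_n.+1 :=
  Ordinal (geq_minr (Num.truncn (n.+1%:R * t)) n : minn _ n < n.+1)%N.

Lemma grid_point_homo : {homo grid_point : i j / (i <= j)%N >-> i <= j}.
Proof.
move=> i j ij; rewrite ler_pM2r ?invr_gt0 ?mulr_gt0 ?ltr0n //.
by rewrite lerD2r ler_pM2l ?ler_nat.
Qed.

Lemma grid_index_homo : {homo grid_index : s t / s <= t >-> (s <= t)%N}.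
Proof.
move=> s t st; rewrite /= leq_min geq_minr andbT (leq_trans (geq_minl _ _)) //.
by apply: le_truncn; rewrite ler_wpM2l.
Qed.

Lemma grid_index_itv (t : R) : 0 <= t <= 1 ->
  (grid_index t)%:R <= n.+1%:R * t <= (grid_index t)%:R + 1.
Proof.
case/andP=> t0 t1; have nt0 : 0 <= n.+1%:R * t by rewrite mulr_ge0.
have /andP[tr_le lt_tr] := truncn_itv nt0.
rewrite /=; case: leqP => [_ | n_tr]; first by rewrite tr_le natr1 ltW.
by rewrite natr1 ler_piMr ?ler0n // andbT (le_trans _ tr_le) // ler_nat ltnW.
Qed.

Lemma dist_grid_point (t : R) : 0 <= t <= 1 ->
  `|t - grid_point (grid_index t)| <= (2 * n.+1%:R)^-1.
Proof.
move=> /grid_index_itv; set m : R := (grid_index t)%:R; set N : R := n.+1%:R.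
move=> /andP[mt tm]; have N0 : 0 < N by rewrite ltr0n.
have -> : t - grid_point (grid_index t) = (N * t - m - 2^-1) / N.
  by rewrite /grid_point -/m -/N; field; rewrite lt0r_neq0.
rewrite normrM normfV (gtr0_norm N0) ler_pdivrMr // ler_norml.
have -> : (2 * N)^-1 * N = 2^-1 by field; rewrite lt0r_neq0.
apply/andP; split; lra.
Qed.

End Grid.

Section Grid_codebook.
Variables (R : realType) (k n : nat).
Implicit Types (y : 'rV[R]_k) (A : pred {ffun 'I_k -> 'I_n.+1}).

Definition grid_codeword (f : {ffun 'I_k -> 'I_n.+1}) : 'rV[R]_k :=
  \row_i grid_point R (f i).

Definition grid_cell y : {ffun 'I_k -> 'I_n.+1} :=
  [ffun i => grid_index n (y ord0 i)].

Definition grid_codebook A : seq 'rV[R]_k := [seq grid_codeword f | f <- enum A].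

Definition monotone_cell : pred {ffun 'I_k -> 'I_n.+1} :=
  [pred f : {ffun 'I_k -> 'I_n.+1} |
    [forall i : 'I_k, forall j : 'I_k, (i <= j)%N ==> (f i <= f j)%N]].

Lemma grid_codeword_in A f : A f -> grid_codeword f \in grid_codebook A.
Proof. by move=> Af; apply: map_f; rewrite mem_enum. Qed.

Lemma size_undup_grid_codebook A : (size (undup (grid_codebook A)) <= n.+1 ^ k)%N.
Proof.
rewrite (leq_trans (size_undup _)) // size_map -cardE.
by rewrite (leq_trans (max_card _)) // card_ffun !card_ord.
Qed.

Lemma qerr_grid_codebook A y : (forall i, 0 <= y ord0 i <= 1) ->
  A (grid_cell y) -> qerr (grid_codebook A) y <= (2 * n.+1%:R)^-1.
Proof.
move=> y01 /grid_codeword_in/qerr_le/le_trans; apply.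
apply: supnorm_le => [|i]; first by rewrite invr_ge0 mulr_ge0.
by rewrite !mxE ffunE; apply: dist_grid_point.
Qed.

Lemma monotone_grid_cell y :
  (forall i j : 'I_k, (i <= j)%N -> y ord0 i <= y ord0 j) -> monotone_cell (grid_cell y).
Proof.
move=> y_mono; apply/forallP => i; apply/forallP => j; apply/implyP => ij.
by rewrite !ffunE grid_index_homo // y_mono.
Qed.

Lemma monotone_grid_codebook : monotone_codebook (grid_codebook monotone_cell).
Proof.
move=> a /mapP[f]; rewrite mem_enum => /forallP f_mono -> i j ij.
by rewrite !mxE grid_point_homo //; apply: (implyP (forallP (f_mono i) j)).
Qed.

End Grid_codebook.

Section Measurability.
Context d (T : measurableType d) (R : realType).

Lemma measurable_bigmax (I : Type) (s : seq I) (x0 : T -> R) (G : I -> T -> R) :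
  measurable_fun setT x0 -> (forall i, measurable_fun setT (G i)) ->
  measurable_fun setT (fun x => \big[Num.max/x0 x]_(i <- s) G i x).
Proof.
move=> mx0 mG; elim: s => [|i s IH]; first by under eq_fun do rewrite big_nil.
by under eq_fun do rewrite big_cons; apply: measurable_maxr.
Qed.

Lemma measurable_bigmin (I : Type) (s : seq I) (x0 : T -> R) (G : I -> T -> R) :
  measurable_fun setT x0 -> (forall i, measurable_fun setT (G i)) ->
  measurable_fun setT (fun x => \big[Num.min/x0 x]_(i <- s) G i x).
Proof.
move=> mx0 mG; elim: s => [|i s IH]; first by under eq_fun do rewrite big_nil.
by under eq_fun do rewrite big_cons; apply: measurable_minr.
Qed.

Lemma measurable_qerr (P : probability T R) k (Y : 'I_k -> {RV P >-> R})
    (C : seq 'rV[R]_k) :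
  measurable_fun setT (fun x => qerr C (rvec Y x)).
Proof.
have msup a : measurable_fun setT (fun x => supnorm (rvec Y x - a)).
  rewrite /supnorm; apply: (@measurable_bigmax _ _ (fun=> 0)) => [|i].
    exact: measurable_cst.
  under eq_fun do rewrite !mxE.
  by apply: measurableT_comp => //; apply: measurable_funB.
case: C => [|a C]; first exact: measurable_cst.
exact: measurable_bigmin.
Qed.

End Measurability.

Lemma distortion_le_ae d (T : measurableType d) (R : realType) (P : probability T R)
    k (Y : 'I_k -> {RV P >-> R}) (s e : R) (C : seq 'rV[R]_k) :
  0 < s -> 0 <= e -> {ae P, forall x, qerr C (rvec Y x) <= e} ->
  (distortion Y s C <= e%:E)%E.
Proof.
move=> s_gt0 e_ge0 qerr_le_e.
have int_le : (\int[P]_x (qerr C (rvec Y x) `^ s)%:E <= (e `^ s)%:E)%E.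
  rewrite -[leRHS]mule1 -(probability_setT P) -integral_cst //.
  apply: ae_ge0_le_integral => //.
  - by move=> x _; rewrite lee_fin powR_ge0.
  - apply/measurable_EFinP/(measurableT_comp (measurable_powR s)).
    exact: measurable_qerr.
  - by move=> x _; rewrite lee_fin powR_ge0.
  - apply: filterS qerr_le_e => x qx _; rewrite lee_fin.
    by apply: ge0_ler_powR => //; rewrite ?nnegrE ?qerr_ge0 ?ltW.
have int_ge0 : (0 <= \int[P]_x (qerr C (rvec Y x) `^ s)%:E)%E.
  by apply: integral_ge0 => x _; rewrite lee_fin powR_ge0.
have s_inv_ge0 : 0 <= s^-1 by rewrite invr_ge0 ltW.
have := gt0_ler_poweR s_inv_ge0 _ _ int_le.
rewrite !in_itv /= !leey int_ge0 lee_fin powR_ge0 -powRrM.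
by rewrite mulfV ?gt_eqF // powRr1 //; apply.
Qed.

Section Grid_size.
Variable R : realType.
Implicit Types x : R.

Lemma truncn_expR_gt0 x : 0 <= x -> (0 < Num.truncn (expR x))%N.
Proof. by move=> x_ge0; rewrite truncn_gt0 (le_trans _ (expR_ge1Dx x)) // lerDl. Qed.

Lemma ln_truncn_expR_le x : 0 <= x -> ln (Num.truncn (expR x))%:R <= x.
Proof.
move=> x_ge0; rewrite -[leRHS]expRK ler_ln ?posrE ?expR_gt0 ?ltr0n ?truncn_expR_gt0 //.
by rewrite truncn_le ltW ?expR_gt0.
Qed.

Lemma inv_double_truncn_expR_le x : 0 <= x ->
  (2 * (Num.truncn (expR x))%:R)^-1 <= expR (- x).
Proof.
move=> x_ge0; have N_gt0 := truncn_expR_gt0 x_ge0.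
rewrite expRN lef_pV2 ?posrE ?expR_gt0 ?mulr_gt0 ?ltr0n //.
have /andP[_ /ltW exp_le] := truncn_itv (ltW (expR_gt0 x)).
by rewrite (le_trans exp_le) // -natr1 mulr_natl mulr2n lerD2l ler1n.
Qed.

End Grid_size.

Lemma Dq_restr_le_grid d (T : measurableType d) (R : realType) (P : probability T R)
    k (Y : 'I_k -> {RV P >-> R}) (adm : seq 'rV[R]_k -> Prop) :
  (0 < k)%N -> (forall i x, 0 <= Y i x <= 1) ->
  (forall n, exists A : pred {ffun 'I_k -> 'I_n.+1},
     [/\ exists f, A f, adm (grid_codebook R A)
       & {ae P, forall x, A (grid_cell n (rvec Y x))}]) ->
  forall s r : R, 0 < s -> 0 <= r ->
    (Dq_restr Y s r adm <= (expR (- r / k%:R))%:E)%E.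
Proof.
move=> k_gt0 Y01 grid_adm s r s_gt0 r_ge0.
have rk_ge0 : 0 <= r / k%:R by rewrite divr_ge0 ?ler0n.
have N_gt0 := truncn_expR_gt0 rk_ge0.
set N := Num.truncn _ in N_gt0.
(* The grid is indexed by 'I_n.+1, hence n := N.-1. *)
have [A [[f Af] admA aeA]] := grid_adm N.-1.
have Cf := grid_codeword_in R Af.
have size_gt0 : (0 < size (undup (grid_codebook R A)))%N.
  by move: Cf; rewrite -mem_undup; case: undup.
have rateC : rate_ok r (grid_codebook R A).
  split; first by move=> C0; rewrite C0 in Cf.
  rewrite (le_trans (y := ln (N%:R ^+ k))) //.
    rewrite ler_ln ?posrE ?exprn_gt0 ?ltr0n // -natrX ler_nat.
    by rewrite -[in X in (_ <= X ^ _)%N](prednK N_gt0) size_undup_grid_codebook.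
  rewrite lnXn ?ltr0n // -(mulr_natr (ln _)) -ler_pdivlMr ?ltr0n //.
  exact: ln_truncn_expR_le.
apply: le_trans (ereal_inf_lbound _) _; first by exists (grid_codebook R A).
apply: distortion_le_ae; rewrite ?expR_ge0 //.
apply: filterS aeA => x Ax; apply: le_trans (qerr_grid_codebook _ Ax) _.
  by move=> i; rewrite mxE.
by rewrite prednK // mulNr inv_double_truncn_expR_le.
Qed.

Theorem lemma3 (d : measure_display) (T : measurableType d) (R : realType)
  (P : probability T R) (k : nat) (Y : 'I_k -> {RV P >-> R}) :
  (1 <= k)%N ->
  (forall i x, 0 <= Y i x <= 1) ->
  (forall s r : R, 0 < s -> 0 <= r ->
     (Dq Y s r <= (expR (- r / k%:R))%:E)%E) /\
  ({ae P, forall x, forall i j : 'I_k, (i <= j)%N -> Y i x <= Y j x} ->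
   forall s r : R, 0 < s -> 0 <= r ->
     (Dq_restr Y s r monotone_codebook <= (expR (- r / k%:R))%:E)%E).
Proof.
move=> k_gt0 Y01; split.
  apply: Dq_restr_le_grid => // n.
  by exists predT; split => //; [exists [ffun=> ord0] | apply: aeW].
move=> Y_mono; apply: Dq_restr_le_grid => // n.
exists (@monotone_cell k n); split; last 2 first.
- exact: monotone_grid_codebook.
- apply: filterS Y_mono => x x_mono; apply: monotone_grid_cell => i j ij.
  by rewrite !mxE x_mono.
exists [ffun=> ord0]; apply/forallP => i; apply/forallP => j.
by rewrite !ffunE implybT.
Qed.
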